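(* Every signed digraph $G$ on $[n]$ ($n\geq 1$) admits a nilpotent function $f:\{0,1,2\}^n\to\{0,1,2\}^n$ of class at most $\lfloor\log_2 n\rfloor+2$.
   Context: A signed digraph is a digraph (loops allowed, no multiple arcs) in which each arc is labeled positive, negative, or null (unsigned). For a finite interval of integers $A$, a function over $A$ is a map $f:A^n\to A^n$; $f^0=\mathrm{id}$, $f^k=f\circ f^{k-1}$. The interaction graph $G(f)$ is the signed digraph on $[n]$ with an arc $(j,i)$ iff $f_i(a)\neq f_i(b)$ for some $a,b\in A^n$ with $a_j<b_j$ and $a_\ell=b_\ell$ for $\ell\neq j$; the arc is positive if $f_i(a)\leq f_i(b)$ for all such pairs, negative if $f_i(a)\geq f_i(b)$ for all such pairs, and null otherwise. $G$ admits $f$ if $G(f)=G$. $f$ is nilpotent if $f^k$ is constant for some $k\geq 0$; the least such $k$ is its class. *)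

From mathcomp Require Import all_boot.
Set Implicit Arguments. Unset Strict Implicit. Unset Printing Implicit Defensive.

Inductive sign := Pos | Neg | Nul.

(* A signed digraph on [n] (vertices 'I_n, loops allowed, no multiple arcs):
   G j i = None      : no arc (j,i)
   G j i = Some s    : arc (j,i) with label s (positive / negative / null). *)
Definition sdigraph (n : nat) := 'I_n -> 'I_n -> option sign.

(* Configurations in A^n with A = {0,...,q-1} = 'I_q, ordered as naturals. *)
Definition config (q n : nat) := {ffun 'I_n -> 'I_q}.

Definition jpair q n (j : 'I_n) (a b : config q n) : bool :=
  (a j < b j) && [forall l : 'I_n, (l != j) ==> (a l == b l)].

Definition igraph q n (f : config q n -> config q n) : sdigraph n :=
  fun j i =>
  if ~~ [exists a : config q n, exists b : config q n,
           jpair j a b && (f a i != f b i)] then None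
  else if [forall a : config q n, forall b : config q n,
             jpair j a b ==> (f a i <= f b i)] then Some Pos
  else if [forall a : config q n, forall b : config q n,
             jpair j a b ==> (f b i <= f a i)] then Some Neg
  else Some Nul.

Definition admits q n (G : sdigraph n) (f : config q n -> config q n) : Prop :=
  forall j i, igraph f j i = G j i.

Definition iter_const q n (f : config q n -> config q n) (k : nat) : Prop :=
  exists c : config q n, forall x, iter k f x = c.

Definition nilpotent q n (f : config q n -> config q n) : Prop :=
  exists k, iter_const f k.

(* f is nilpotent of class at most m: the least k with f^k constant is <= m,
   i.e. f^k is constant for some k <= m *)
Definition nilpotent_class_le q n (f : config q n -> config q n) (m : nat) : Prop :=
  exists2 k, k <= m & iter_const f k.

From mathcomp Require Import all_boot zify.
Set Implicit Arguments. Unset Strict Implicit. Unset Printing Implicit Defensive.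

(* Every non-source vertex i picks a parent p among its in-neighbours and has two
   values, a fixed value c_i and an alternative d_i.  f_i returns d_i exactly when a
   gate literal on x_p (false at c_p) holds and some other in-neighbour j satisfies
   its literal; the literals and the order of c_i, d_i are chosen so that every arc
   gets its prescribed sign, and c is the unique value of f^k for large k.  Once x_p
   has settled in {c_p, d_p}, i settles one step later unless its gate is true at
   d_p; this happens only when i is lagging, i.e. when the heaviest child of p (in
   subtree size) has an arc label of the other kind, so i has a sibling with at least
   as large a subtree.  Along a chain of lagging vertices subtree sizes thus more than
   double, so such chains have length at most log2 n and f^(log2 n + 2) = c. *)

Definition arc_of_slopes (up down : bool) : option sign :=
  if up then (if down then Some Nul else Some Pos)
  else if down then Some Neg else None.

Section Slopes.
Variables q n : nat.
Implicit Types (x a b : config q n) (j : 'I_n) (R : rel nat) (F : config q n -> nat).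

Definition upd x j (v : 'I_q) : config q n := [ffun l => if l == j then v else x l].

Lemma upd_at x j v : upd x j v j = v.
Proof. by rewrite ffunE eqxx. Qed.

Lemma upd_id x j : upd x j (x j) = x.
Proof. by apply/ffunP => l; rewrite ffunE; case: eqP => [->|]. Qed.

Lemma jpair_upd j a b : jpair j a b -> b = upd a j (b j).
Proof.
case/andP => _ /forallP same; apply/ffunP => l; rewrite ffunE.
by case: eqP => [->//|/eqP ne]; move: (same l); rewrite ne => /eqP.
Qed.

Lemma jpair_upd_upd x j (al be : 'I_q) : al < be -> jpair j (upd x j al) (upd x j be).
Proof.
move=> lt; rewrite /jpair !upd_at lt; apply/forallP => l; apply/implyP => ne.
by rewrite !ffunE (negbTE ne).
Qed.

Definition jslope j R F := [exists a, exists b, jpair j a b && R (F a) (F b)].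

Definition slope R (g : 'I_q -> nat) :=
  [exists al : 'I_q, exists be : 'I_q, (al < be) && R (g al) (g be)].

Lemma jslope_const j R F :
  irreflexive R -> (forall x v, F (upd x j v) = F x) -> jslope j R F = false.
Proof.
move=> irrR constF; apply/negbTE/existsP => -[a /existsP [b /andP [ab]]].
by rewrite (jpair_upd ab) constF irrR.
Qed.

Lemma jslope_gated j R F (A : pred (config q n)) (g : 'I_q -> nat) (h : config q n -> nat) :
  (forall x v, F (upd x j v) = if A x then g v else h x) ->
  (exists x, A x) -> (forall x, R (h x) (h x) = false) ->
  jslope j R F = slope R g.
Proof.
move=> gatedF [x0 Ax0] irrh; apply/existsP/existsP.
  case=> a /existsP [b /andP [ab]]; rewrite (jpair_upd ab) -{1}(upd_id a j) !gatedF.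
  case: (A a); last by rewrite irrh.
  by move=> Rab; exists (a j); apply/existsP; exists (b j); rewrite Rab andbT; case/andP: ab.
case=> al /existsP [be /andP [lt Rg]]; exists (upd x0 j al); apply/existsP.
by exists (upd x0 j be); rewrite jpair_upd_upd // !gatedF Ax0.
Qed.

End Slopes.

Lemma igraphE q n (f : config q n -> config q n) j i :
  igraph f j i =
  arc_of_slopes (jslope j ltn (fun x => f x i)) (jslope j gtn (fun x => f x i)).
Proof.
set F := fun x => (f x i : nat).
have noslope R : ~~ jslope j R F = [forall a, forall b, jpair j a b ==> ~~ R (F a) (F b)].
  rewrite negb_exists; apply: eq_forallb => a.
  by rewrite negb_exists; apply: eq_forallb => b; rewrite negb_and implybE.
rewrite /igraph /arc_of_slopes.
have -> : [forall a, forall b, jpair j a b ==> (f a i <= f b i)] = ~~ jslope j gtn F.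
  by rewrite noslope; apply: eq_forallb => a; apply: eq_forallb => b; rewrite /= leqNgt.
have -> : [forall a, forall b, jpair j a b ==> (f b i <= f a i)] = ~~ jslope j ltn F.
  by rewrite noslope; apply: eq_forallb => a; apply: eq_forallb => b; rewrite /= leqNgt.
have -> : [exists a, exists b, jpair j a b && (f a i != f b i)] =
          jslope j ltn F || jslope j gtn F.
  apply/existsP/orP => [[a /existsP [b /andP [ab]]]|].
    by rewrite neq_ltn => /orP [] lt; [left|right];
      apply/existsP; exists a; apply/existsP; exists b; rewrite ab.
  by case=> /existsP [a /existsP [b /andP [ab lt]]]; exists a; apply/existsP; exists b;
    move: lt; rewrite ab /= neq_ltn => ->; rewrite ?orbT.
by case: (jslope j ltn F); case: (jslope j gtn F).
Qed.

Definition o0 : 'I_3 := @Ordinal 3 0 isT.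
Definition o1 : 'I_3 := @Ordinal 3 1 isT.
Definition o2 : 'I_3 := @Ordinal 3 2 isT.

Lemma ord3P (v : 'I_3) : [\/ v = o0, v = o1 | v = o2].
Proof. by case: v => -[|[|[|//]]] lt; [apply: Or31|apply: Or32|apply: Or33]; apply: val_inj. Qed.

Lemma slope3E R (g : 'I_3 -> nat) :
  slope R g = [|| R (g o0) (g o1), R (g o0) (g o2) | R (g o1) (g o2)].
Proof.
apply/existsP/or3P => [[al /existsP [be /andP []]]|].
  by case: (ord3P al) => ->; case: (ord3P be) => -> // _ r; [apply: Or31|apply: Or32|apply: Or33].
by case=> r; [exists o0|exists o0|exists o1]; apply/existsP; [exists o1|exists o2|exists o2];
  rewrite r.
Qed.

Section FunctionalGraph.
Variables (T : finType) (f : T -> T).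

Definition cyclic x := fconnect f (f x) x.

Lemma cyclic_of_preimage x y : fconnect f y x -> f x = y -> cyclic y.
Proof.
move=> /iter_findex yx fx; rewrite /cyclic.
by rewrite -{2}fx -yx -iterS iterSr fconnect_iter.
Qed.

Lemma cyclic_of_collision z u w :
  fconnect f z u -> fconnect f z w -> f u = f w -> u != w -> cyclic (f u).
Proof.
move=> /iter_findex zu /iter_findex zw fuw.
wlog lt : u w zu zw fuw / findex f z u < findex f z w.
  move=> hwlog; case: (ltngtP (findex f z u) (findex f z w)) => [lt|gt|eq].
  - exact: hwlog.
  - by rewrite fuw eq_sym; apply: hwlog.
  - by rewrite -zu -zw eq eqxx.
move=> _; apply: (@cyclic_of_preimage w); last by [].
have -> : w = iter (findex f z w - (findex f z u).+1) f (f u).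
  by rewrite -{2}zu -iterS -iterD subnK.
exact: fconnect_iter.
Qed.

Lemma findex_cyclic_preimage y c :
  f c = y -> fconnect f y c -> (findex f y c).+1 = order f y.
Proof.
move=> fc yc; apply/eqP; rewrite eqn_leq findex_max //= leqNgt; apply/negP => lt.
by have := findex_iter lt; rewrite iterS iter_findex // fc findex0.
Qed.

Lemma cyclic_preimage_uniq a b :
  f a = f b -> fconnect f (f a) a -> fconnect f (f a) b -> a = b.
Proof.
move=> fab ra rb; rewrite -(iter_findex ra) -(iter_findex rb).
by congr iter; apply: succn_inj; rewrite !findex_cyclic_preimage.
Qed.

End FunctionalGraph.

Section ParentForest.
Variables (n : nat) (G : sdigraph n).
Implicit Types (i j y z : 'I_n) (x : config 3 n).

Definition null_arc (s : option sign) := if s is Some Nul then true else false.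
Definition pos_arc (s : option sign) := if s is Some Pos then true else false.

Definition source i := [forall j, ~~ isSome (G j i)].
Definition parent i := if [pick j | isSome (G j i)] is Some j then j else i.
Definition null_parent_arc i := null_arc (G (parent i) i).
Definition subtree y := [set z | fconnect parent z y].

Definition heavy_null y :=
  [exists c, (parent c == y) && null_parent_arc c &&
     [forall c', (parent c' == y) ==> (#|subtree c'| <= #|subtree c|)]].

Definition lagging i :=
  ~~ source i && ~~ source (parent i) && (heavy_null (parent i) != null_parent_arc i).

Lemma parent_arc i : ~~ source i -> isSome (G (parent i) i).
Proof.
rewrite /source /parent negb_forall => /existsP [j]; rewrite negbK => ji.
by case: pickP => [k -> //|/(_ j)]; rewrite ji.
Qed.

Lemma source_arc i j : source i -> G j i = None.
Proof. by move/forallP/(_ j); case: (G j i). Qed.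

Lemma in_subtree z y : (z \in subtree y) = fconnect parent z y.
Proof. by rewrite inE. Qed.

Lemma heavier_sibling i : heavy_null (parent i) != null_parent_arc i ->
  exists h, [/\ parent h = parent i, h != i & #|subtree i| <= #|subtree h|].
Proof.
have [h /eqP ph hmax] := @arg_maxnP _ i (fun c => parent c == parent i)
  (fun c => #|subtree c|) (eqxx _).
case ni: (null_parent_arc i); case hp: (heavy_null (parent i)) => // _.
- exists h; split => //; last exact: hmax.
  apply/eqP => ehi; move/negbT: hp; apply/negP/negPn/existsP; exists h.
  by rewrite ph eqxx ehi ni; apply/forallP => c; apply/implyP => /hmax; rewrite -ehi.
- move: hp => /existsP [c /andP [/andP [/eqP pc tc] /forallP cmax]].
  exists c; split => //; first by apply/eqP => eci; rewrite eci ni in tc.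
  exact: (implyP (cmax i) (eqxx _)).
Qed.

Lemma lagging_acyclic i : lagging i -> ~~ cyclic parent i.
Proof.
move=> li; apply/negP => ci.
have [|h [ph hi hle]] := @heavier_sibling i; first by case/andP: li.
have sub : subtree h \subset subtree i.
  apply/subsetP => z; rewrite !in_subtree => zh.
  by apply: connect_trans (connect_trans zh (fconnect1 _ h)) _; rewrite ph.
have out : parent i \notin subtree h.
  rewrite in_subtree; apply/negP => pih; move/eqP: hi; apply.
  by apply: (cyclic_preimage_uniq ph); rewrite ph.
have : subtree h \proper subtree i.
  by apply/properP; split => //; exists (parent i); rewrite // in_subtree.
by move/proper_card; rewrite ltnNge hle.
Qed.

Lemma lagging_subtree_double i : lagging i -> lagging (parent i) ->
  (#|subtree i|).*2.+1 <= #|subtree (parent i)|.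
Proof.
move=> li lp; set y := parent i.
have [|h [ph hi hle]] := @heavier_sibling i; first by case/andP: li.
have ny := lagging_acyclic lp.
have dis : subtree i :&: subtree h = set0.
  apply/setP => z; rewrite !inE; apply/negbTE/andP => -[zi zh].
  by move/negP: ny; apply; rewrite /y -ph; apply: cyclic_of_collision zh zi _ _.
have yout c : parent c = y -> y \notin subtree c.
  by move=> pc; rewrite in_subtree; apply/negP => yc; move/negP: ny; apply;
    apply: cyclic_of_preimage yc pc.
have sub : y |: (subtree i :|: subtree h) \subset subtree y.
  apply/subsetP => z; rewrite !inE => /orP [/eqP ->|/orP [] zc]; first exact: connect0.
    exact: connect_trans zc (fconnect1 _ i).
  by apply: connect_trans zc _; rewrite /y -ph; apply: fconnect1.
move: (subset_leq_card sub); rewrite cardsU1 inE negb_or !yout // cardsU dis cards0.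
by rewrite -addnn; lia.
Qed.

Lemma lagging_subtree_lt i : lagging i -> #|subtree i| < n.
Proof.
move=> li; rewrite -[X in _ < X]card_ord -cardsT; apply: proper_card.
apply/properP; split; first exact: subsetT.
by exists (parent i); rewrite ?inE //; apply: lagging_acyclic.
Qed.

Lemma lagging_chain_subtree i k : (forall l, l <= k -> lagging (iter l parent i)) ->
  (2 ^ k.+1).-1 <= #|subtree (iter k parent i)|.
Proof.
elim: k => [|k IH] lag_le.
  by apply/card_gt0P; exists i; rewrite in_subtree connect0.
have := IH (fun l lk => lag_le l (leq_trans lk (leqnSn _))).
have := lagging_subtree_double (lag_le k (leqnSn _)) (lag_le k.+1 (leqnn _)).
rewrite -iterS [2 ^ k.+2]expnS; lia.
Qed.

Lemma lagging_chain_lt i k : (forall l, l <= k -> lagging (iter l parent i)) ->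
  2 ^ k.+1 <= n.
Proof.
move=> lag_le; have := lagging_chain_subtree lag_le.
have := lagging_subtree_lt (lag_le k (leqnn _)); have := expn_gt0 2 k.+1; lia.
Qed.

Lemma exists_nonlagging_ancestor i : exists k, ~~ lagging (iter k parent i).
Proof.
case: (boolP [exists k : 'I_n.+1, ~~ lagging (iter k parent i)]) => [/existsP [k]|];
  first by exists k.
rewrite negb_exists => /forallP all_lag.
have : 2 ^ n.+1 <= n.
  apply: (@lagging_chain_lt i) => l ln.
  by have := all_lag (Ordinal (ln : l < n.+1)); rewrite negbK.
by have := ltn_expl n.+1 (isT : 1 < 2); lia.
Qed.

Definition lag i := ex_minn (exists_nonlagging_ancestor i).

Lemma lagging_below_lag i l : l < lag i -> lagging (iter l parent i).
Proof. by rewrite /lag; case: ex_minnP => m _ mmin lm; apply/negPn/negP => /mmin; lia. Qed.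

Lemma exp2_lag_le i : 2 ^ lag i <= n.
Proof.
case li: (lag i) => [|k]; first by have := ltn_ord i; rewrite expn0; lia.
by apply: (@lagging_chain_lt i) => l lk; apply: lagging_below_lag; rewrite li ltnS.
Qed.

Lemma lag_lt i : lag i < n.
Proof. exact: leq_trans (ltn_expl _ (isT : 1 < 2)) (exp2_lag_le i). Qed.

Lemma lag_parent_lt i : lagging i -> lag (parent i) < lag i.
Proof.
move=> li; rewrite {2}/lag; case: ex_minnP => -[|k]; first by rewrite /= li.
rewrite iterSr => nl _; rewrite /lag; case: ex_minnP => m _ /(_ k nl).
by rewrite ltnS.
Qed.

(* [orient i] says whether d_i > c_i.  Its recursion only follows lagging arcs, so
   [n] unfoldings suffice (see [orientE]). *)
Fixpoint orient_upto k i : bool :=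
  if k is k'.+1 then
    if source i || null_parent_arc i then true
    else pos_arc (G (parent i) i) ==
         ~~ [&& ~~ source (parent i), heavy_null (parent i) & ~~ orient_upto k' (parent i)]
  else true.

Lemma orient_uptoS k i : orient_upto k.+1 i =
  if source i || null_parent_arc i then true
  else pos_arc (G (parent i) i) ==
       ~~ [&& ~~ source (parent i), heavy_null (parent i) & ~~ orient_upto k (parent i)].
Proof. by []. Qed.

Lemma orient_upto_stable k i : lag i < k -> orient_upto k.+1 i = orient_upto k i.
Proof.
elim: k i => [|k IH] i lt //; rewrite (orient_uptoS k.+1 i) (orient_uptoS k i).
case si: (source i) => //; case ni: (null_parent_arc i) => //.
case sp: (source (parent i)) => //; case hp: (heavy_null (parent i)) => //.
have li : lagging i by rewrite /lagging si sp hp ni.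
by rewrite IH //; have := lag_parent_lt li; lia.
Qed.

Definition orient i := orient_upto n i.

Definition top i : nat := if heavy_null i then 2 else 1.
Definition fixed_val i : nat := if source i then 1 else if orient i then 0 else top i.
Definition alt_val i : nat := if orient i then top i else 0.

Lemma fixed_val_eq2 i : (fixed_val i == 2) = [&& ~~ source i, heavy_null i & ~~ orient i].
Proof. by rewrite /fixed_val /top; case: source; case: orient; case: heavy_null. Qed.

Lemma orientE i : orient i =
  if source i || null_parent_arc i then true
  else pos_arc (G (parent i) i) == (fixed_val (parent i) != 2).
Proof. by rewrite /orient -orient_upto_stable ?lag_lt // orient_uptoS fixed_val_eq2. Qed.

Lemma fixed_val_le i : fixed_val i <= 2.
Proof. by rewrite /fixed_val /top; case: source; case: orient; case: heavy_null. Qed.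

Lemma alt_val_le i : alt_val i <= 2.
Proof. by rewrite /alt_val /top; case: orient; case: heavy_null. Qed.

Definition gate i (z : nat) : bool :=
  if null_parent_arc i then (if fixed_val (parent i) == 1 then z != 1 else z == 1)
  else (if fixed_val (parent i) == 2 then z == 0 else z == 2).

Definition lit_val j i : nat :=
  if null_arc (G j i) then 1 else if pos_arc (G j i) == orient i then 2 else 0.

Definition side_inputs i : {set 'I_n} := [set j | isSome (G j i) && (j != parent i)].

Definition lits_hit (S : {set 'I_n}) i (x : config 3 n) : bool :=
  [exists j in S, (x j : nat) == lit_val j i].

Definition side_ok i (x : config 3 n) : bool :=
  (side_inputs i == set0) || lits_hit (side_inputs i) i x.

Definition switched i (x : config 3 n) : bool :=
  [&& ~~ source i, gate i (x (parent i)) & side_ok i x].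

Definition next_val i (x : config 3 n) : nat :=
  if switched i x then alt_val i else fixed_val i.

Definition fnil (x : config 3 n) : config 3 n := [ffun i => inord (next_val i x)].

Lemma fnil_val (x : config 3 n) i : (fnil x i : nat) = next_val i x.
Proof.
rewrite ffunE inordK // ltnS /next_val.
by case: switched; [apply: alt_val_le|apply: fixed_val_le].
Qed.

Lemma gate_fixed i : gate i (fixed_val (parent i)) = false.
Proof.
by rewrite /gate; case: null_parent_arc; case: (fixed_val (parent i)) => [|[|[|?]]].
Qed.

Lemma gate_alt i : ~~ source (parent i) -> heavy_null (parent i) = null_parent_arc i ->
  gate i (alt_val (parent i)) = false.
Proof.
rewrite /gate /alt_val /fixed_val /top => /negbTE -> <-.
by case: heavy_null; case: orient.
Qed.

Lemma fnil_val_in (x : config 3 n) i : (fnil x i : nat) \in [:: fixed_val i; alt_val i].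
Proof. by rewrite fnil_val /next_val !inE; case: switched; rewrite eqxx ?orbT. Qed.

Definition settle_time i := if source i then 1 else (lag i).+2.

Lemma iter_fnil_settled t (x : config 3 n) i :
  settle_time i <= t -> (iter t fnil x i : nat) = fixed_val i.
Proof.
elim: t i => [|t IH] i; first by rewrite /settle_time; case: source.
rewrite iterS fnil_val /next_val /switched /settle_time.
case si: (source i) => //= st; set y := iter t fnil x.
suff -> : gate i (y (parent i)) = false by [].
case sp: (source (parent i)).
  by rewrite IH ?gate_fixed // /settle_time sp; lia.
case li: (lagging i).
  rewrite IH ?gate_fixed // /settle_time sp.
  by have := lag_parent_lt li; lia.
case: t IH @y st => [|t] IH y st; first by lia.
have := fnil_val_in (iter t fnil x) (parent i); rewrite -iterS !inE.
case/orP => /eqP ->; first exact: gate_fixed.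
by apply: gate_alt; [rewrite sp|move: li; rewrite /lagging si sp /=; case: eqP].
Qed.

Lemma lit_val_le j i : lit_val j i <= 2.
Proof. by rewrite /lit_val; case: null_arc => //; case: (_ == _). Qed.

Lemma lits_hit_upd (S : {set 'I_n}) i j (x : config 3 n) v :
  j \notin S -> lits_hit S i (upd x j v) = lits_hit S i x.
Proof.
move=> jS; apply: eq_existsb => k; case kS: (k \in S) => //=.
by rewrite ffunE; case: (eqVneq k j) kS jS => [->->|].
Qed.

Lemma parent_notin_side_inputs i : parent i \notin side_inputs i.
Proof. by rewrite inE eqxx andbF. Qed.

Lemma side_ok_upd i j (x : config 3 n) v :
  j \notin side_inputs i -> side_ok i (upd x j v) = side_ok i x.
Proof. by move=> jS; rewrite /side_ok lits_hit_upd. Qed.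

Lemma side_ok_lits i : side_ok i [ffun l => inord (lit_val l i)].
Proof.
rewrite /side_ok; case: eqP => [//|/eqP/set0Pn [k kS]]; apply/existsP; exists k.
by rewrite kS ffunE inordK ?eqxx // ltnS lit_val_le.
Qed.

Lemma side_ok_split i j (x : config 3 n) : j \in side_inputs i ->
  side_ok i x = ((x j : nat) == lit_val j i) || lits_hit (side_inputs i :\ j) i x.
Proof.
move=> jS; rewrite /side_ok; case: eqP => [S0|_]; first by rewrite S0 inE in jS.
apply/existsP/orP => [[k /andP [kS hit]]|[hit|/existsP [k /andP [kS hit]]]].
- case: (eqVneq k j) => [<-|nkj]; first by left.
  by right; apply/existsP; exists k; rewrite in_setD1 nkj kS.
- by exists j; rewrite jS.
- by exists k; move: kS; rewrite in_setD1 => /andP [_ ->].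
Qed.

Lemma gate_exists i : exists v : 'I_3, gate i v.
Proof.
rewrite /gate; case: null_parent_arc.
- by case: (_ == 1); [exists o0|exists o1].
- by case: (_ == 2); [exists o0|exists o2].
Qed.

Definition parent_response i (v : 'I_3) : nat :=
  if gate i v then alt_val i else fixed_val i.

Definition side_response j i (v : 'I_3) : nat :=
  if (v : nat) == lit_val j i then alt_val i else fixed_val i.

Lemma parent_response_slopes i : ~~ source i ->
  arc_of_slopes (slope ltn (parent_response i)) (slope gtn (parent_response i)) =
  G (parent i) i.
Proof.
move=> si; have fi : fixed_val i = if orient i then 0 else top i.
  by rewrite /fixed_val (negbTE si).
have := parent_arc si; have := fixed_val_le (parent i).
rewrite !slope3E /parent_response fi /alt_val (orientE i) (negbTE si) /gate /null_parent_arc.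
case: (G (parent i) i) => [[]|] //= _ _;
  by case: (fixed_val (parent i)) => [|[|[|?]]]; rewrite /top; case: heavy_null.
Qed.

Lemma side_response_slopes j i : isSome (G j i) ->
  arc_of_slopes (slope ltn (side_response j i)) (slope gtn (side_response j i)) = G j i.
Proof.
move=> ji; have si : source i = false.
  by apply/negbTE/negP => /(source_arc j) j0; rewrite j0 in ji.
rewrite !slope3E /side_response /lit_val /alt_val /fixed_val si /top.
by case: (G j i) ji => [[]|] //= _; case: orient; case: heavy_null.
Qed.

Lemma fnil_arc_source j i : source i -> igraph fnil j i = G j i.
Proof.
move=> si; have constF x v : (fnil (upd x j v) i : nat) = fnil x i.
  by rewrite !fnil_val /next_val /switched si.
by rewrite igraphE source_arc // !(jslope_const ltnn constF).
Qed.

Lemma fnil_arc_parent i : ~~ source i -> igraph fnil (parent i) i = G (parent i) i.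
Proof.
move=> si; rewrite -(parent_response_slopes si) igraphE.
have gatedF x v : (fnil (upd x (parent i) v) i : nat) =
    if side_ok i x then parent_response i v else fixed_val i.
  rewrite fnil_val /next_val /switched si side_ok_upd ?parent_notin_side_inputs //.
  by rewrite upd_at /parent_response; case: side_ok; case: gate.
have okF : exists x, side_ok i x by exists [ffun l => inord (lit_val l i)]; apply: side_ok_lits.
by rewrite !(jslope_gated gatedF okF (fun=> ltnn _)).
Qed.

Lemma fnil_arc_nonadjacent j i : j != parent i -> G j i = None -> igraph fnil j i = None.
Proof.
move=> jp j0; have constF x v : (fnil (upd x j v) i : nat) = fnil x i.
  rewrite !fnil_val /next_val /switched side_ok_upd ?inE ?j0 //.
  by rewrite ffunE eq_sym (negbTE jp).
by rewrite igraphE !(jslope_const ltnn constF).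
Qed.

Lemma fnil_arc_side j i : j \in side_inputs i -> igraph fnil j i = G j i.
Proof.
move=> jS; have /andP [ji jp] : isSome (G j i) && (j != parent i) by rewrite inE in jS.
have si : ~~ source i by apply/negP => /(source_arc j) j0; rewrite j0 in ji.
rewrite -(side_response_slopes ji) igraphE.
set others := lits_hit (side_inputs i :\ j) i.
have gatedF x v : (fnil (upd x j v) i : nat) =
    if gate i (x (parent i)) && ~~ others x then side_response j i v
    else if gate i (x (parent i)) && others x then alt_val i else fixed_val i.
  rewrite fnil_val /next_val /switched si (side_ok_split _ jS) upd_at /others.
  rewrite lits_hit_upd ?setD11 // ffunE eq_sym (negbTE jp) /side_response.
  by case: gate; case: lits_hit; case: (_ == _).
have [gv gate_gv] := gate_exists i.
have okF : exists x, gate i (x (parent i)) && ~~ others x.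
  exists [ffun l => if l == parent i then gv else inord (lit_val l i == 0)].
  rewrite ffunE eqxx gate_gv /=; apply/existsP => -[k /andP [kS]].
  move: kS; rewrite !inE => /andP [_ /andP [_ /negbTE kp]].
  rewrite ffunE kp inordK; last by case: (_ == _).
  by case: (lit_val k i).
by rewrite !(jslope_gated gatedF okF (fun=> ltnn _)).
Qed.

Lemma fnil_admits : admits G fnil.
Proof.
move=> j i; case si: (source i); first exact: fnil_arc_source.
case: (eqVneq j (parent i)) => [->|jp]; first by apply: fnil_arc_parent; rewrite si.
case ji: (G j i) => [s|]; last exact: fnil_arc_nonadjacent.
by rewrite -ji fnil_arc_side // inE ji.
Qed.

Definition fixed_config : config 3 n := [ffun i => inord (fixed_val i)].

Lemma settle_time_le i : settle_time i <= trunc_log 2 n + 2.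
Proof.
rewrite /settle_time; case: source; first by rewrite addn2.
by have := trunc_log_max (isT : 1 < 2) (exp2_lag_le i); lia.
Qed.

Lemma iter_fnil_fixed x : iter (trunc_log 2 n + 2) fnil x = fixed_config.
Proof.
apply/ffunP => i; rewrite ffunE; apply: val_inj.
by rewrite /= inordK ?ltnS ?fixed_val_le // iter_fnil_settled ?settle_time_le.
Qed.

End ParentForest.

Theorem theorem1 (n : nat) (G : sdigraph n) :
  1 <= n ->
  exists f : config 3 n -> config 3 n,
    admits G f /\ nilpotent f /\ nilpotent_class_le f (trunc_log 2 n + 2).
Proof.
move=> _; exists (fnil G).
have settled : iter_const (fnil G) (trunc_log 2 n + 2).
  by exists (fixed_config G); apply: iter_fnil_fixed.
split; first exact: fnil_admits.
by split; exists (trunc_log 2 n + 2).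
Qed.
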